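(* Let $\mathcal{M}^r_{g,d}$ be an expected maximal Brill--Noether locus. Then $$(2r+1)\left\lfloor\frac{-\rho(g,r,d)+1}{2}\right\rfloor-\left\lfloor\frac{-\rho(g,r,d)}{2}\right\rfloor\le g$$ holds unless $\rho(g,r,d)=-(r+1)=-\lceil\sqrt g\rceil$ is odd and $g$ is not a perfect square.
   Context: $\rho(g,r,d)=g-(r+1)(g-d+r)$; $\mathcal{M}^r_{g,d}\subseteq\mathcal{M}_g$ is the locus of smooth genus $g$ curves admitting a $g^r_d$. A Brill--Noether locus is expected maximal if $d$ is maximal such that $\rho(g,r,d)<0$ and $\rho(g,r-1,d-1)\ge0$ (up to Serre duality); concretely the expected maximal loci are the $\mathcal{M}^r_{g,d}$ with $2r\le d\le g-1$, where $1\le r\le\lceil\sqrt g-1\rceil$ if $g\ge\lfloor\sqrt g\rfloor^2+\lfloor\sqrt g\rfloor$, $1\le r\le\lfloor\sqrt g-1\rfloor$ if $g<\lfloor\sqrt g\rfloor^2+\lfloor\sqrt g\rfloor$, and $d=r+\lceil gr/(r+1)\rceil-1$. *)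

From Stdlib Require Import PeanoNat.
From mathcomp Require Import all_boot all_order all_algebra.
Set Implicit Arguments. Unset Strict Implicit. Unset Printing Implicit Defensive.
Import Order.TTheory GRing.Theory Num.Theory.

Definition rho (g r d : nat) : int :=
  (g%:Z - (r.+1)%:Z * (g%:Z - d%:Z + r%:Z))%R.

Definition fsqrt (g : nat) : nat := Nat.sqrt g.
Definition csqrt (g : nat) : nat :=
  if fsqrt g * fsqrt g == g then fsqrt g else (fsqrt g).+1.

Definition perfect_square (g : nat) : Prop := exists k : nat, k * k = g.

Definition ceil_div (a b : nat) : nat := (a + b - 1) %/ b.

(* Expected maximal Brill--Noether loci M^r_{g,d}, concrete description:
   2r <= d <= g-1, 1 <= r <= ceil(sqrt g - 1) = ceil(sqrt g) - 1 if
   g >= floor(sqrt g)^2 + floor(sqrt g), 1 <= r <= floor(sqrt g - 1)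
   = floor(sqrt g) - 1 otherwise, and d = r + ceil(gr/(r+1)) - 1. *)
Definition expected_maximal (g r d : nat) : Prop :=
  [/\ 2 * r <= d, d <= g - 1, 1 <= r,
      (if fsqrt g * fsqrt g + fsqrt g <= g
       then r <= csqrt g - 1 else r <= fsqrt g - 1)
    & d = r + ceil_div (g * r) r.+1 - 1].

From Stdlib Require Import PeanoNat.
From mathcomp Require Import all_boot all_order all_algebra.
From mathcomp Require Import zify.
Import Order.TTheory GRing.Theory Num.Theory.

(* Write g = q (r+1) + s with s <= r.  The bound on r in [expected_maximal]
   gives r (r+1) <= g, i.e. q >= r, and the formula for d gives
   g - d + r = q + 1, so t := -rho = r + 1 - s.  The claim reads r t <= g for
   t even and r t + r + 1 <= g for t odd.  As r t <= r (r+1), only the odd case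
   with q = r and s = 0 can fail: then g = r (r+1) and -rho = r + 1 is odd,
   csqrt g = r + 1 and g is not a perfect square. *)

Lemma fsqrt_bounds (g : nat) : fsqrt g * fsqrt g <= g < (fsqrt g).+1 * (fsqrt g).+1.
Proof.
have [lo hi] := Nat.sqrt_spec g (Nat.le_0_l g).
by apply/andP; split; [apply/ssrnat.leP | apply/ssrnat.ltP].
Qed.

Lemma fsqrt_pronic (r : nat) : fsqrt (r * r.+1) = r.
Proof. by apply: Nat.sqrt_unique; split; [apply/ssrnat.leP | apply/ssrnat.ltP]; lia. Qed.

Lemma csqrt_pronic (r : nat) : 0 < r -> csqrt (r * r.+1) = r.+1.
Proof. by move=> r_gt0; rewrite /csqrt fsqrt_pronic; case: eqP => //; lia. Qed.

Lemma pronic_not_perfect_square (r : nat) : 0 < r -> ~ perfect_square (r * r.+1).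
Proof.
move=> r_gt0 [x def_x].
by case: (leqP x r) => [x_le_r | r_lt_x];
  [have := leq_mul x_le_r x_le_r | have := leq_mul r_lt_x r_lt_x]; lia.
Qed.

Lemma pronic_le_expected_maximal {g r d : nat} :
  expected_maximal g r d -> r * r.+1 <= g.
Proof.
case=> _ _ r_gt0 r_le _; have /andP[sq_le _] := fsqrt_bounds g; move: r_le.
rewrite /csqrt; set f := fsqrt g.
case: ifP => [pronic_le | _] r_le.
- have r_le_f : r <= f by move: r_le; case: ifP; lia.
  by apply: leq_trans pronic_le; rewrite addnC -mulnS leq_mul.
- have r_lt_f : r < f by lia.
  by apply: leq_trans sq_le; apply: leq_mul; lia.
Qed.

Lemma ceil_div_mul_succ (g r : nat) : ceil_div (g * r) r.+1 = g - g %/ r.+1.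
Proof.
rewrite /ceil_div; have s_lt : g %% r.+1 < r.+1 by rewrite ltn_mod.
have def_g := divn_eq g r.+1; set q := g %/ r.+1 in def_g *.
set s := g %% r.+1 in def_g s_lt *.
have -> : g * r + r.+1 - 1 = (g - q) * r.+1 + (r - s) by rewrite def_g; nia.
by rewrite divnMDl // divn_small ?addn0 //; lia.
Qed.

Lemma neg_rho_expected_maximal {g r d : nat} :
  expected_maximal g r d -> (- rho g r d = (r.+1 - g %% r.+1)%N%:Z)%R.
Proof.
move=> em; have r_le_q : r <= g %/ r.+1.
  by rewrite leq_divRL //; apply: pronic_le_expected_maximal em.
case: em => _ _ r_gt0 _; rewrite ceil_div_mul_succ => ->.
have s_lt : g %% r.+1 < r.+1 by rewrite ltn_mod.
have def_g := divn_eq g r.+1; set q := g %/ r.+1 in def_g r_le_q *.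
set s := g %% r.+1 in def_g s_lt *.
rewrite /rho.
have -> : (Posz g - Posz (r + (g - q) - 1) + Posz r)%R = Posz q.+1 by lia.
by rewrite def_g; nia.
Qed.

Lemma floor_bound_nat {g r : nat} :
  r * r.+1 <= g -> ~ (g = r * r.+1 /\ odd r.+1) ->
  (2 * r + 1) * ((r.+1 - g %% r.+1).+1 %/ 2) <= g + (r.+1 - g %% r.+1) %/ 2.
Proof.
move=> pronic_le not_exc.
have s_lt : g %% r.+1 < r.+1 by rewrite ltn_mod.
have r_le_q : r <= g %/ r.+1 by rewrite leq_divRL.
have def_g := divn_eq g r.+1; set q := g %/ r.+1 in def_g r_le_q *.
set s := g %% r.+1 in def_g s_lt *; set t := r.+1 - s.
have def_t := odd_double_half t.
rewrite !divn2 -uphalfE uphalf_half.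
have r_le_tr : r * t <= r * r.+1 by rewrite leq_mul2l leq_subr orbT.
case: (boolP (odd t)) def_t => [odd_t | _] def_t /=; last by nia.
have [[q_eq s_eq0] | slack] : (q = r /\ s = 0) \/ (r < q \/ 0 < s) by lia.
  exfalso; apply: not_exc; split; first by rewrite def_g q_eq s_eq0 addn0.
  by move: odd_t; rewrite /t s_eq0 subn0.
by case: slack => [q_gt | s_gt0]; rewrite def_g; nia.
Qed.

Theorem lemma3p2 (g r d : nat) :
  expected_maximal g r d ->
  ~ [/\ rho g r d = (- (r.+1)%:Z)%R, r.+1 = csqrt g,
        odd `|rho g r d|%N & ~ perfect_square g] ->
  ((2 * r + 1)%:Z * ((- rho g r d + 1) %/ 2)%Z - ((- rho g r d) %/ 2)%Z
     <= g%:Z)%R.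
Proof.
move=> em not_exc; have r_gt0 : 0 < r by case: em.
have neg_rho := neg_rho_expected_maximal em.
have not_pronic_odd : ~ (g = r * r.+1 /\ odd r.+1).
  move=> [def_g odd_r1]; apply: not_exc.
  have s_eq0 : g %% r.+1 = 0 by rewrite def_g modnMl.
  have rho_eq : rho g r d = (- (r.+1)%:Z)%R.
    by rewrite -[LHS]opprK neg_rho s_eq0 subn0.
  rewrite rho_eq def_g csqrt_pronic //.
  by split=> //; apply: pronic_not_perfect_square.
have := floor_bound_nat (pronic_le_expected_maximal em) not_pronic_odd.
by rewrite neg_rho -PoszD addn1 !divz_nat; lia.
Qed.
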